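(* Let $T>0$ and let $M,N\ge 1$ be integers. Let $a\in L^2(\mathbb R)$ be supported in $[-T_a/2,T_a/2]$ for some $T_a>0$ (no further restriction on $T_a$), and suppose $a$ is square-root Nyquist for the interval $T/M$ with energy $1/N$, i.e. $$\int_{\mathbb R} a(t)\,a^*\!\left(t-k\tfrac{T}{M}\right)dt=\tfrac1N\,\delta(k)\quad\text{for all }k\in\mathbb Z.$$ Define the DDOP $u(t)=\sum_{\dot n=0}^{N-1}a(t-\dot nT)$, let $D=\lceil T_a/T\rceil$, and define its cyclically extended version $$u_c(t)=\sum_{n=-D}^{N-1+D}a(t-nT).$$ Then $$\mathcal A_{u_c,u}\!\left(m\tfrac{T}{M},\,n\tfrac{1}{NT}\right)=\delta(m)\,\delta(n)$$ for all integers $m,n$ with $|m|\le M-1$ and $|n|\le N-1$.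
   Context: For $g,\gamma\in L^2(\mathbb R)$, the (cross-)ambiguity function is $\mathcal A_{g,\gamma}(\tau,\nu)=\int_{\mathbb R} g(t)\,\gamma^*(t-\tau)\,e^{-j2\pi\nu(t-\tau)}\,dt$. Here $\delta(\cdot)$ denotes the Kronecker delta on integers, $j=\sqrt{-1}$, and $\lceil\cdot\rceil$ is the ceiling function. *)

From mathcomp Require Import all_boot all_order all_algebra.
From mathcomp Require Import all_classical all_reals all_analysis.
From mathcomp Require Import complex.
Import Order.TTheory GRing.Theory Num.Theory.
Local Open Scope ring_scope.
Local Open Scope complex_scope.

Set Implicit Arguments.
Unset Strict Implicit.
Unset Printing Implicit Defensive.

Definition Cintegral (R : realType) (f : R -> R[i]) : R[i] :=
  (Rintegral (@lebesgue_measure R) setT (fun t => complex.Re (f t)))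
  +i* (Rintegral (@lebesgue_measure R) setT (fun t => complex.Im (f t))).

Definition expj (R : realType) (theta : R) : R[i] := cos theta +i* sin theta.

Definition L2 (R : realType) (f : R -> R[i]) : Prop :=
  measurable_fun setT (fun t => complex.Re (f t)) /\
  measurable_fun setT (fun t => complex.Im (f t)) /\
  (\int[@lebesgue_measure R]_t ((complex.Re (f t)) ^+ 2 + (complex.Im (f t)) ^+ 2)%:E < +oo)%E.

Definition ambiguity (R : realType) (g gamma : R -> R[i]) (tau nu : R) : R[i] :=
  Cintegral (fun t => g t * (gamma (t - tau))^* *
                       expj (- (2 * pi * nu * (t - tau)))).

Definition kdelta (R : realType) (k : int) : R[i] := (k == 0)%:R.

Definition ddop (R : realType) (N : nat) (T : R) (a : R -> R[i]) (t : R) : R[i] :=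
  \sum_(n < N) a (t - n%:R * T).

(* Cyclically extended DDOP u_c(t) = sum_{n=-D}^{N-1+D} a(t - n T),
   with n = i - D, i = 0 .. N - 1 + 2D. *)
Definition ddop_c (R : realType) (N D : nat) (T : R) (a : R -> R[i]) (t : R) : R[i] :=
  \sum_(i < N + 2 * D) a (t - (i%:R - D%:R) * T).

From mathcomp Require Import all_boot all_order all_algebra.
From mathcomp Require Import all_classical all_reals all_analysis.
From mathcomp Require Import complex measurable_realfun ring lra zify.
Import Order.TTheory GRing.Theory Num.Theory.
Import numFieldNormedType.Exports.
Local Open Scope classical_set_scope.
Local Open Scope ring_scope.
Local Open Scope complex_scope.

(* Expanding both pulse trains writes the integrand as a double sum of cross
   terms a(t - iT) a^*(t - tau - jT) e^{-j 2 pi nu (t - tau)}.  Translating the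
   j-th group by jT pulls out the factor e^{-j 2 pi nu jT} and leaves a sum over
   the lag k = i - j; since |tau| < T and T_a <= DT, only lags |k| <= D
   survive, and the D extra pulses on each side of u_c make every such lag
   appear for every j.  The ambiguity function therefore factors as a geometric
   sum in e^{-j 2 pi n/N}, which vanishes for 0 < |n| < N, times a sum of lagged
   autocorrelations of a, which the Nyquist condition reduces to delta(m)/N. *)

Section lebesgue_translation.
Context {R : realType}.
Local Notation mu := (@lebesgue_measure R).

Lemma measurable_addr (c : R) : measurable_fun [set: R] (+%R^~ c).
Proof. by apply: measurable_funD => //; exact: measurable_cst. Qed.

Lemma lebesgue_measure_addr (c : R) (A : set R) : measurable A ->
  pushforward mu (+%R^~ c : R -> measurableTypeR R) A = mu A.
Proof.
move=> mA; apply/esym.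
apply: (@lebesgue_measure_unique R (pushforward mu (+%R^~ c : R -> measurableTypeR R)) _ A mA).
  exact: measurable_addr.
move=> mc X; rewrite /ocitv => -[[x y] _ <-].
rewrite [RHS](_ : _ = mu `](x - c), (y - c)]%classic); last first.
  congr (mu _); apply/seteqP; split => z /=; rewrite !in_itv /=.
    by rewrite ltrBlDr lerBrDr.
  by rewrite -ltrBlDr -lerBrDr.
rewrite !lebesgue_measure_itv /= !lte_fin ltrD2r.
by case: ifP => // _; rewrite -!EFinD opprB addrA addrNK.
Qed.

Lemma ge0_integral_addr (c : R) (f : R -> \bar R) : measurable_fun setT f ->
  (forall x, 0 <= f x)%E -> (\int[mu]_x f (x + c)%R = \int[mu]_x f x)%E.
Proof.
move=> mf f0.
have := @ge0_integral_pushforward _ _ (measurableTypeR R) (measurableTypeR R) R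
  (+%R^~ c) (measurable_addr c) mu setT f measurableT mf (fun y _ => f0 y).
rewrite preimage_setT => <-.
apply: eq_measure_integral => [|mc A mA _]; [exact: measurable_addr|exact: lebesgue_measure_addr].
Qed.

Lemma integral_addr (c : R) (f : R -> \bar R) : measurable_fun setT f ->
  (\int[mu]_x f (x + c)%R = \int[mu]_x f x)%E.
Proof.
move=> mf; rewrite integralE [RHS]integralE.
have mfp : measurable_fun setT (funepos f) by exact: measurable_funepos.
have mfn : measurable_fun setT (funeneg f) by exact: measurable_funeneg.
have := ge0_integral_addr c (funepos f) mfp (fun x => funepos_ge0 f x).
have := ge0_integral_addr c (funeneg f) mfn (fun x => funeneg_ge0 f x).
by move=> <- <-; congr (_ - _)%E; apply: eq_integral => x _; rewrite ?funeposE ?funenegE.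
Qed.

End lebesgue_translation.

Section complex_integral.
Context {R : realType}.
Local Notation mu := (@lebesgue_measure R).
Local Notation Re := (@complex.Re R).
Local Notation Im := (@complex.Im R).
Implicit Types (f g : R -> R[i]) (z w : R[i]).

Lemma Re_addc z w : Re (z + w) = Re z + Re w. Proof. by case: z; case: w. Qed.
Lemma Im_addc z w : Im (z + w) = Im z + Im w. Proof. by case: z; case: w. Qed.
Lemma Re_mulc z w : Re (z * w) = Re z * Re w - Im z * Im w.
Proof. by case: z; case: w. Qed.
Lemma Im_mulc z w : Im (z * w) = Re z * Im w + Im z * Re w.
Proof. by case: z => ? ?; case: w. Qed.
Lemma Re_conjc z : Re z^* = Re z. Proof. by case: z. Qed.
Lemma Im_conjc z : Im z^* = - Im z. Proof. by case: z. Qed.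

Definition Cmeasurable f :=
  measurable_fun setT (fun t => Re (f t)) /\ measurable_fun setT (fun t => Im (f t)).

Definition Cintegrable f :=
  mu.-integrable setT (EFin \o (fun t => Re (f t))) /\
  mu.-integrable setT (EFin \o (fun t => Im (f t))).

Lemma Cintegrable0 : Cintegrable (fun _ => 0).
Proof. by split; apply: eq_integrable (integrable0 mu setT). Qed.

Lemma CintegrableD f g : Cintegrable f -> Cintegrable g ->
  Cintegrable (fun t => f t + g t).
Proof.
move=> [f1 f2] [g1 g2]; split.
- by apply: eq_integrable (integrableD _ f1 g1) => // t _; rewrite /= Re_addc.
- by apply: eq_integrable (integrableD _ f2 g2) => // t _; rewrite /= Im_addc.
Qed.

Lemma Cintegral0 : Cintegral (fun _ : R => 0 : R[i]) = 0.
Proof. by rewrite /Cintegral /= /Rintegral integral0. Qed.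

Lemma CintegralD f g : Cintegrable f -> Cintegrable g ->
  Cintegral (fun t => f t + g t) = Cintegral f + Cintegral g.
Proof.
move=> [f1 f2] [g1 g2]; rewrite /Cintegral.
have -> : (fun t => Re (f t + g t)) = (fun t => Re (f t) + Re (g t)).
  by apply/funext => t; rewrite Re_addc.
have -> : (fun t => Im (f t + g t)) = (fun t => Im (f t) + Im (g t)).
  by apply/funext => t; rewrite Im_addc.
by rewrite !RintegralD.
Qed.

Lemma CintegralZl (c : R[i]) f : Cintegrable f ->
  Cintegral (fun t => c * f t) = c * Cintegral f.
Proof.
move=> [f1 f2]; rewrite /Cintegral.
have -> : (fun t => Re (c * f t)) = (fun t => Re c * Re (f t) - Im c * Im (f t)).
  by apply/funext => t; rewrite Re_mulc.
have -> : (fun t => Im (c * f t)) = (fun t => Re c * Im (f t) + Im c * Re (f t)).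
  by apply/funext => t; rewrite Im_mulc.
have iZ (k : R) (h : R -> R) : mu.-integrable setT (EFin \o h) ->
    mu.-integrable setT (EFin \o (fun t => k * h t)).
  by move=> ih; apply: eq_integrable (integrableZl _ k ih).
rewrite RintegralB ?RintegralD ?RintegralZl //; try exact: iZ.
by case: c.
Qed.

Section sums.
Variables (I : Type) (F : I -> R -> R[i]).
Hypothesis iF : forall i, Cintegrable (F i).

Lemma Cintegrable_sum (s : seq I) : Cintegrable (fun t => \sum_(i <- s) F i t).
Proof.
elim: s => [|i s ih]; under eq_fun do rewrite ?big_nil ?big_cons.
  exact: Cintegrable0.
exact: CintegrableD.
Qed.

Lemma Cintegral_sum (s : seq I) :
  Cintegral (fun t => \sum_(i <- s) F i t) = \sum_(i <- s) Cintegral (F i).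
Proof.
elim: s => [|i s ih]; under eq_fun do rewrite ?big_nil ?big_cons.
  by rewrite big_nil Cintegral0.
by rewrite big_cons CintegralD ?ih //; exact: Cintegrable_sum.
Qed.

End sums.

Lemma Cintegrable_Cmeasurable {f} : Cintegrable f -> Cmeasurable f.
Proof. by case=> /measurable_int/measurable_EFinP ? /measurable_int/measurable_EFinP. Qed.

Lemma Cintegral_addr (c : R) {f} : Cmeasurable f ->
  Cintegral (fun t => f (t + c)) = Cintegral f.
Proof.
move=> [m1 m2]; rewrite /Cintegral /Rintegral.
by rewrite (integral_addr c (EFin \o (fun t => Re (f t))))
  ?(integral_addr c (EFin \o (fun t => Im (f t)))) //; exact/measurable_EFinP.
Qed.

Lemma Cmeasurable_comp_subr (x : R) f : Cmeasurable f ->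
  Cmeasurable (fun t => f (t - x)).
Proof.
have mx : measurable_fun setT (fun t : R => t - x).
  by apply: measurable_funB => //; exact: measurable_cst.
by move=> [m1 m2]; split; [exact: measurableT_comp m1 mx|exact: measurableT_comp m2 mx].
Qed.

Lemma Cmeasurable_conj f : Cmeasurable f -> Cmeasurable (fun t => (f t)^*).
Proof.
move=> [m1 m2]; split; first by under eq_fun do rewrite Re_conjc.
by under eq_fun do rewrite Im_conjc; exact: measurable_funN.
Qed.

Lemma CmeasurableM f g : Cmeasurable f -> Cmeasurable g ->
  Cmeasurable (fun t => f t * g t).
Proof.
move=> [f1 f2] [g1 g2]; split.
- by under eq_fun do rewrite Re_mulc; apply: measurable_funB; exact: measurable_funM.
- by under eq_fun do rewrite Im_mulc; apply: measurable_funD; exact: measurable_funM.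
Qed.

Lemma Cmeasurable_expj_affine (al be : R) : Cmeasurable (fun t => expj (al * t + be)).
Proof.
have ma : measurable_fun setT (fun t : R => al * t + be).
  apply: measurable_funD; last exact: measurable_cst.
  by apply: measurable_funM; [exact: measurable_cst|exact: measurable_id].
split.
- exact: measurableT_comp (continuous_measurable_fun (@continuous_cos R)) ma.
- exact: measurableT_comp (continuous_measurable_fun (@continuous_sin R)) ma.
Qed.

Definition sqnormc z := Re z ^+ 2 + Im z ^+ 2.

Lemma sqnormc_ge0 z : 0 <= sqnormc z.
Proof. by rewrite addr_ge0 // sqr_ge0. Qed.

Lemma sqnormc_mul z w : sqnormc (z * w) = sqnormc z * sqnormc w.
Proof. by case: z => ? ?; case: w => ? ?; rewrite /sqnormc /=; ring. Qed.

Lemma sqnormc_conj z : sqnormc z^* = sqnormc z.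
Proof. by rewrite /sqnormc Re_conjc Im_conjc sqrrN. Qed.

Lemma sqnormc_expj (th : R) : sqnormc (expj th) = 1.
Proof. exact: cos2Dsin2. Qed.

Lemma norm_le_add_of_sqr_le_mul (x p q : R) : 0 <= p -> 0 <= q ->
  x ^+ 2 <= p * q -> `|x| <= p + q.
Proof.
by move=> p0 q0 hx; rewrite ler_norml; apply/andP; split; nra.
Qed.

Lemma L2_integrable_sqnormc {f} : L2 f ->
  mu.-integrable setT (EFin \o (fun t => sqnormc (f t))).
Proof.
move=> [m1 [m2 fin]]; apply/integrableP; split.
  by apply/measurable_EFinP; apply: measurable_funD; exact: measurable_funX.
under eq_integral do rewrite /= ger0_norm ?sqnormc_ge0 //.
exact: fin.
Qed.

Lemma L2_comp_subr (x : R) f : L2 f -> L2 (fun t => f (t - x)).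
Proof.
move=> hf; have [m1 m2] : Cmeasurable (fun t => f (t - x)).
  by apply: Cmeasurable_comp_subr; case: hf => ? [].
split; [exact: m1|split; [exact: m2|]].
have mf : measurable_fun setT (fun t => (sqnormc (f t))%:E).
  by have /integrableP[] := L2_integrable_sqnormc hf.
rewrite (integral_addr (- x) _ mf).
by case: hf => _ [].
Qed.

Lemma Cintegrable_mul_conj_expj f g (al be : R) : L2 f -> L2 g ->
  Cintegrable (fun t => f t * (g t)^* * expj (al * t + be)).
Proof.
move=> hf hg.
have [h1 h2] : Cmeasurable (fun t => f t * (g t)^* * expj (al * t + be)).
  apply: CmeasurableM; last exact: Cmeasurable_expj_affine.
  by apply: CmeasurableM; last apply: Cmeasurable_conj; [case: hf => ? []|case: hg => ? []].
have ifg := integrableD measurableT (L2_integrable_sqnormc hf) (L2_integrable_sqnormc hg).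
have hv t : sqnormc (f t * (g t)^* * expj (al * t + be)) = sqnormc (f t) * sqnormc (g t).
  by rewrite !sqnormc_mul sqnormc_conj sqnormc_expj mulr1.
have bound (x : R -> R) : measurable_fun setT x ->
    (forall t, x t ^+ 2 <= sqnormc (f t) * sqnormc (g t)) ->
    mu.-integrable setT (EFin \o x).
  move=> mx hx; apply: (le_integrable measurableT _ _ ifg).
    exact/measurable_EFinP.
  move=> t _; rewrite /= lee_fin [X in _ <= X]ger0_norm.
    exact: norm_le_add_of_sqr_le_mul (sqnormc_ge0 _) (sqnormc_ge0 _) (hx t).
  exact: addr_ge0 (sqnormc_ge0 _) (sqnormc_ge0 _).
split; apply: bound => // t; rewrite -hv /sqnormc.
- by rewrite lerDl sqr_ge0.
- by rewrite lerDr sqr_ge0.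
Qed.

End complex_integral.

Section complex_exponential.
Context {R : realType}.

Lemma expj0 : expj (0 : R) = 1.
Proof. by rewrite /expj cos0 sin0. Qed.

Lemma expjD (u v : R) : expj (u + v) = expj u * expj v.
Proof. by rewrite /expj cosD sinD /=; congr Complex; ring. Qed.

Lemma expjN (u : R) : expj (- u) = (expj u)^*.
Proof. by rewrite /expj cosN sinN. Qed.

Lemma expjMn (x : R) (k : nat) : expj (k%:R * x) = expj x ^+ k.
Proof.
elim: k => [|k ih]; first by rewrite mul0r expj0 expr0.
by rewrite -addn1 natrD mulrDl mul1r expjD ih addn1 exprSr.
Qed.

Lemma expj_2piZ (z : int) : expj (2 * pi * z%:~R : R) = 1.
Proof.
have expj_2pin (k : nat) : expj (2 * pi * k%:R : R) = 1.
  by rewrite mulrC expjMn /expj mulr_natl cos2pi sin2pi expr1n.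
case: z => k; first exact: expj_2pin.
by rewrite NegzE intrN mulrN expjN expj_2pin conjc1.
Qed.

Lemma cos_lt1 (x : R) : 0 < x < pi *+ 2 -> cos x < 1.
Proof.
move=> /andP[x0 x2pi].
have sx : 0 < sin (x / 2) by apply: sin_gt0_pi; apply/andP; split; lra.
have -> : x = (x / 2) *+ 2 by rewrite mulr2n; field.
by rewrite cos_mulr2n cos2sin2; nra.
Qed.

Lemma expj_neq1 (x : R) : 0 < `|x| < pi *+ 2 -> expj x != 1.
Proof.
move=> /cos_lt1; rewrite cos_norm => hx.
by apply/eqP => -[hc _]; move: hx; rewrite hc ltxx.
Qed.

End complex_exponential.

Lemma sum_root_unity_eq0 (R : idomainType) (w : R) (N : nat) :
  w ^+ N = 1 -> w != 1 -> \sum_(j < N) w ^+ j = 0.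
Proof.
move=> wN w1; apply/eqP; have := subrX1 w N.
by rewrite wN subrr => /esym/eqP; rewrite mulf_eq0 subr_eq0 (negbTE w1).
Qed.

Lemma sum_expj_root_unity (R : realType) (N : nat) (n : int) :
  n != 0 -> (`|n| < N)%N ->
  \sum_(j < N) expj (- (2 * pi * n%:~R / N%:R) : R) ^+ j = 0.
Proof.
move=> n0 nN; have N0 : (N%:R : R) != 0 by rewrite pnatr_eq0; lia.
apply: sum_root_unity_eq0.
  by rewrite -expjMn -(expj_2piZ (- n)) intrN; congr expj; field.
have hn : `|n%:~R : R| = (`|n|%N)%:R by rewrite natr_absz intr_norm.
have n1 : (1 <= (`|n|%N)%:R :> R) by rewrite ler1n absz_gt0.
have nN' : ((`|n|%N)%:R < N%:R :> R) by rewrite ltr_nat.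
have hN : (0 : R) < N%:R by lra.
apply: expj_neq1; rewrite normrN !normrM normfV hn !ger0_norm ?pi_ge0 //.
have pi0 := @pi_gt0 R.
apply/andP; split.
  by apply: divr_gt0 => //; apply: mulr_gt0; lra.
by rewrite ltr_pdivrMr // mulr2n; nra.
Qed.

Lemma sum_window {V : nmodType} {F : int -> V} {N D j : nat} :
  (forall k : int, (D < `|k|)%N -> F k = 0) -> (j < N)%N ->
  \sum_(i < N + 2 * D) F (i%:Z - D%:Z - j%:Z) = \sum_(l < (2 * D).+1) F (l%:Z - D%:Z).
Proof.
move=> F0 jN.
rewrite -(big_mkord xpredT (fun i => F (i%:Z - D%:Z - j%:Z))).
rewrite -(big_mkord xpredT (fun l => F (l%:Z - D%:Z))).
rewrite (@big_cat_nat _ _ _ j) //=; last lia.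
rewrite (@big_cat_nat _ _ _ (j + (2 * D).+1) j) ?leq_addr //=; last lia.
rewrite big_nat_cond big1 ?add0r; last by move=> i /andP[/andP[_ ?] _]; apply: F0; lia.
rewrite [X in _ + X]big_nat_cond [X in _ + X]big1 ?addr0; last first.
  by move=> i /andP[/andP[? _] _]; apply: F0; lia.
rewrite -{1 2}(add0n j) big_addn addKn.
by apply: eq_bigr => i _; congr F; lia.
Qed.

Lemma sum_kdelta_window (R : realType) (D : nat) :
  \sum_(l < (2 * D).+1) kdelta R (l%:Z - D%:Z) = 1.
Proof.
have lD : (D < (2 * D).+1)%N by lia.
rewrite (bigD1 (Ordinal lD)) //= subrr /kdelta eqxx big1 ?addr0 // => l lD'.
by case: eqP => // lD0; case/negP: lD'; apply/eqP/val_inj => /=; lia.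
Qed.

Lemma kdelta_subrM (R : realType) (m k : int) (M : nat) : (`|m| < M)%N ->
  kdelta R (m - k * M%:Z) = kdelta R m * kdelta R k.
Proof.
move=> mM; rewrite /kdelta -natrM; congr (_%:R).
have [->|k0] := eqVneq k 0; first by rewrite mul0r subr0 muln1.
by rewrite muln0; case: eqP => //; nia.
Qed.

Lemma far_lag_gap {R : realType} (Ta T tau : R) (D : nat) (k : int) :
  0 < T -> `|tau| < T -> Ta <= D%:R * T -> (D < `|k|)%N -> Ta < `|k%:~R * T - tau|.
Proof.
move=> T0 tauT TaD kD.
have kD' : (D%:R + 1 : R) <= `|k%:~R| by rewrite -intr_norm -natr_absz natr1 ler_nat.
have := ler_normD (k%:~R * T - tau) tau.
rewrite subrK normrM (gtr0_norm T0) => hk.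
have : 0 <= (`|k%:~R| - D%:R - 1) * T by apply: mulr_ge0; lra.
lra.
Qed.

Section ddop_ambiguity.
Context {R : realType} {a : R -> R[i]}.
Hypothesis aL2 : L2 a.

Definition cross_term (x y al be t : R) : R[i] :=
  a (t - x) * (a (t - y))^* * expj (al * t + be).

Lemma Cintegrable_cross_term x y al be : Cintegrable (cross_term x y al be).
Proof. by apply: Cintegrable_mul_conj_expj; exact: L2_comp_subr. Qed.

Lemma Cintegral_cross_term_shift x y al be c :
  Cintegral (cross_term x y al be) =
  expj (al * c) * Cintegral (cross_term (x - c) (y - c) al be).
Proof.
have mG := Cintegrable_Cmeasurable (Cintegrable_cross_term x y al be).
rewrite -(Cintegral_addr c mG) -CintegralZl; last exact: Cintegrable_cross_term.
congr Cintegral; apply/funext => t; rewrite /cross_term.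
have -> : al * (t + c) + be = (al * t + be) + al * c by ring.
by rewrite expjD !opprB !addrA; ring.
Qed.

Lemma Cintegral_cross_term_eq0 (Ta x y al be : R) :
  (forall t, Ta / 2 < `|t| -> a t = 0) -> Ta < `|x - y| ->
  Cintegral (cross_term x y al be) = 0.
Proof.
move=> a0 xy; rewrite -Cintegral0; congr Cintegral; apply/funext => t.
have [tx|tx] := ltrP (Ta / 2) `|t - x|; first by rewrite /cross_term a0 ?mul0r.
have [ty|ty] := ltrP (Ta / 2) `|t - y|.
  by rewrite /cross_term (a0 (t - y)) // rmorph0 mulr0 mul0r.
move: xy; rewrite ltNge => /negP[].
have -> : x - y = (t - y) - (t - x) by ring.
by apply: le_trans (ler_normB _ _) _; lra.
Qed.

Lemma ambiguity_ddop_integrand (N D : nat) (T tau nu t : R) :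
  ddop_c N D T a t * (ddop N T a (t - tau))^* * expj (- (2 * pi * nu * (t - tau)))
  = \sum_(j < N) \sum_(i < N + 2 * D)
      cross_term ((i%:R - D%:R) * T) (tau + j%:R * T) (- (2 * pi * nu)) (2 * pi * nu * tau) t.
Proof.
rewrite /ddop_c /ddop raddf_sum big_distrl /= big_distrl /= exchange_big /=.
apply: eq_bigr => j _; rewrite big_distrr /= big_distrl /=; apply: eq_bigr => i _.
rewrite /cross_term; congr (_ * _^* * expj _); last by ring.
by congr a; ring.
Qed.

Lemma ambiguity_ddop_c_ddop {Ta T tau nu : R} {N D : nat} :
  0 < T -> (forall t, Ta / 2 < `|t| -> a t = 0) -> `|tau| < T -> Ta <= D%:R * T ->
  ambiguity (ddop_c N D T a) (ddop N T a) tau nu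
  = (\sum_(j < N) expj (- (2 * pi * nu * T)) ^+ j) *
    \sum_(l < (2 * D).+1)
      Cintegral (cross_term ((l%:Z - D%:Z)%:~R * T) tau (- (2 * pi * nu)) (2 * pi * nu * tau)).
Proof.
move=> T0 a0 tauT TaD.
pose F k := Cintegral (cross_term (k%:~R * T) tau (- (2 * pi * nu)) (2 * pi * nu * tau)).
have F0 k : (D < `|k|)%N -> F k = 0.
  by move=> kD; apply: (Cintegral_cross_term_eq0 _ _ _ _ _ a0); exact: far_lag_gap T0 tauT TaD kD.
rewrite /ambiguity; under eq_fun do rewrite ambiguity_ddop_integrand.
rewrite Cintegral_sum => [|j]; last by apply: Cintegrable_sum => i; exact: Cintegrable_cross_term.
rewrite mulr_suml; apply: eq_bigr => j _.
rewrite Cintegral_sum => [|i]; last exact: Cintegrable_cross_term.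
rewrite -(sum_window F0 (ltn_ord j)) mulr_sumr.
apply: eq_bigr => i _; rewrite (Cintegral_cross_term_shift _ _ _ _ (j%:R * T)) -expjMn.
congr (expj _ * Cintegral (cross_term _ _ _ _)); first ring.
- by rewrite !intrB !mulrBl.
- by rewrite addrK.
Qed.

Lemma Cintegral_cross_term_nyquist {T : R} {M N : nat} {m k : int} :
  (M%:R : R) != 0 ->
  (forall k : int,
     Cintegral (fun t => a t * (a (t - k%:~R * (T / M%:R)))^*) = (N%:R)^-1 * kdelta R k) ->
  Cintegral (cross_term (k%:~R * T) (m%:~R * (T / M%:R)) 0 0)
  = (N%:R)^-1 * kdelta R (m - k * M%:Z).
Proof.
move=> M0 nyq; rewrite (Cintegral_cross_term_shift _ _ _ _ (k%:~R * T)) mul0r expj0 mul1r -nyq.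
congr Cintegral; apply/funext => t; rewrite /cross_term mul0r add0r expj0 mulr1 subrr subr0.
by congr (a t * (a (t - _))^*); rewrite intrB intrM; field.
Qed.

End ddop_ambiguity.

Lemma norm_delay_lt {R : realType} (T : R) (M : nat) (m : int) :
  0 < T -> (`|m| < M)%N -> `|m%:~R * (T / M%:R)| < T.
Proof.
move=> T0 mM; have M0 : (0 : R) < M%:R by rewrite ltr0n; lia.
rewrite normrM -intr_norm -natr_absz gtr0_norm ?divr_gt0 // mulrA ltr_pdivrMr //.
by rewrite mulrC ltr_pM2l // ltr_nat.
Qed.

Theorem lemma2 (R : realType) (T Ta : R) (M N : nat) (a : R -> R[i]) :
  0 < T -> (1 <= M)%N -> (1 <= N)%N -> 0 < Ta ->
  L2 a ->
  (forall t : R, Ta / 2 < `|t| -> a t = 0) ->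
  (forall k : int,
     Cintegral (fun t => a t * (a (t - k%:~R * (T / M%:R)))^*)
     = (N%:R)^-1 * kdelta R k) ->
  let D := `|Num.ceil (Ta / T)|%N in
  forall m n : int, (`|m| <= (M - 1)%:Z) -> (`|n| <= (N - 1)%:Z) ->
    ambiguity (ddop_c N D T a) (ddop N T a)
              (m%:~R * (T / M%:R)) (n%:~R * (N%:R * T)^-1)
    = kdelta R m * kdelta R n.
Proof.
move=> T0 M1 N1 Ta0 aL2 a0 nyq D m n mM nN.
have M0 : (M%:R : R) != 0 by rewrite pnatr_eq0 -lt0n.
have N0 : (N%:R : R) != 0 by rewrite pnatr_eq0 -lt0n.
have {mM}mM : (`|m| < M)%N by lia.
have {nN}nN : (`|n| < N)%N by lia.
have TaD : Ta <= D%:R * T.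
  rewrite /D natr_absz gtr0_norm ?ceil_gt0 ?divr_gt0 // -ler_pdivrMr //; exact: ceil_ge.
rewrite (ambiguity_ddop_c_ddop aL2 T0 a0 (norm_delay_lt _ _ _ T0 mM) TaD).
have -> : 2 * pi * (n%:~R * (N%:R * T)^-1) * T = 2 * pi * n%:~R / N%:R.
  by field; rewrite N0 gt_eqF.
have [-> | n0] := eqVneq n 0; last first.
  by rewrite sum_expj_root_unity // mul0r /kdelta (negbTE n0) mulr0.
rewrite !(mul0r, mulr0, oppr0, expj0).
under eq_bigr do rewrite expr1n.
under [X in _ * X]eq_bigr do rewrite (Cintegral_cross_term_nyquist aL2 M0 nyq) kdelta_subrM //.
rewrite sumr_const card_ord -mulr_sumr -mulr_sumr sum_kdelta_window /kdelta eqxx.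
by rewrite !mulr1 mulrA mulfV ?mul1r // pnatr_eq0 -lt0n.
Qed.
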